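(* Consider the scaled induction machine model with state $x=(\tilde i_{s\alpha},\tilde i_{s\beta},\tilde\psi_{r\alpha},\tilde\psi_{r\beta},\omega_e,T_r)^T$, input $\mathcal{V}_s\in\mathbb{R}^2$ (differentiable in time): $$\dot{\tilde{\mathcal{I}}}_s=\mathcal{V}_s+a\tilde{\mathcal{I}}_s+\gamma\tilde\Psi_r,\quad \dot{\tilde\Psi}_r=-\gamma\tilde\Psi_r-(a-b)\tilde{\mathcal{I}}_s,\quad \dot\omega_e=\tfrac{c}{J}\tilde{\mathcal{I}}_s^T\mathbf{J}_2\tilde\Psi_r-\tfrac{p}{J}T_r,\quad \dot T_r=0,$$ with $\gamma=\frac{1}{\tau_r}\mathbf{I}_2-\omega_e\mathbf{J}_2$, $\mathbf{J}_2=\begin{bmatrix}0&-1\\1&0\end{bmatrix}$, and output $y=\tilde{\mathcal{I}}_s$. Let $\mathcal{O}(x)$ be the $6\times6$ matrix whose rows are the gradients with respect to $x$ (columns in the order above) of $\tilde i_{s\alpha},\tilde i_{s\beta},\mathcal{L}_f\tilde i_{s\alpha},\mathcal{L}_f\tilde i_{s\beta},\mathcal{L}_f^2\tilde i_{s\alpha},\mathcal{L}_f^2\tilde i_{s\beta}$. Writing $\Psi_r=(\psi_{r\alpha},\psi_{r\beta})^T=\tilde\Psi_r/k_r$, one has $$\det\mathcal{O}(x)=\frac{p}{J}\frac{k_r^2}{\tau_r^2}\Big[\tau_r\dot\omega_e\big(\psi_{r\alpha}^2+\psi_{r\beta}^2\big)-\big(1+\tau_r^2\omega_e^2\big)\Big(\dot\psi_{r\alpha}\psi_{r\beta}-\dot\psi_{r\beta}\psi_{r\alpha}\Big)\Big],$$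 where $\dot\omega_e,\dot\psi_{r\alpha},\dot\psi_{r\beta}$ denote the right-hand sides of the model (functions of the state).
   Context: $a=-R_\sigma/L_\sigma$, $b=-R_s/L_\sigma$, $c=p^2/L_\sigma$, $k_r=M/L_r$, $\tau_r=L_r/R_r$, $L_\sigma=\sigma L_s$, $\sigma=1-M^2/(L_sL_r)$, $R_\sigma=R_s+k_r^2R_r$; $\tilde{\mathcal{I}}_s=L_\sigma\mathcal{I}_s$, $\tilde\Psi_r=k_r\Psi_r$; $p,J,\tau_r,k_r>0$. Lie derivatives: $\mathcal{L}_f^0h=h$, $\mathcal{L}_f^{k+1}h$ is the time derivative of $\mathcal{L}_f^kh$ along the model (terms involving $\dot{\mathcal{V}}_s$ do not depend on $x$). *)

From Stdlib Require Import Reals ClassicalEpsilon.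
Open Scope R_scope.

Record IMParams := mkIMParams {
  Rs : R; Rr : R; Ls : R; Lr : R; Mi : R; p : R; J : R }.

Definition sigma (P : IMParams) : R := 1 - (Mi P)^2 / (Ls P * Lr P).
Definition L_sigma (P : IMParams) : R := sigma P * Ls P.
Definition k_r (P : IMParams) : R := Mi P / Lr P.
Definition tau_r (P : IMParams) : R := Lr P / Rr P.
Definition R_sigma (P : IMParams) : R := Rs P + (k_r P)^2 * Rr P.
Definition a_c (P : IMParams) : R := - R_sigma P / L_sigma P.
Definition b_c (P : IMParams) : R := - Rs P / L_sigma P.
Definition c_c (P : IMParams) : R := (p P)^2 / L_sigma P.

(** State x = (i_sa, i_sb, psi_ra, psi_rb, omega_e, T_r) (scaled), indices 0..5. *)
Definition state := nat -> R.

(** Total derivative operator: the derivative of g at t when it exists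
    (chosen by classical description; junk value otherwise). *)
Definition deriv_at (g : R -> R) (t : R) : R :=
  epsilon (inhabits 0) (fun l => derivable_pt_lim g t l).

Definition upd (x : state) (j : nat) (u : R) : state :=
  fun k => if Nat.eqb k j then u else x k.

Definition pderiv (h : state -> R) (x : state) (j : nat) : R :=
  deriv_at (fun u => h (upd x j u)) (x j).

(** Right-hand side of the scaled model, with input V = (V1, V2) (functions of time).
    gamma = (1/tau_r) I2 - omega_e J2,  J2 = [[0,-1],[1,0]]. *)
Definition field (P : IMParams) (V1 V2 : R -> R) (t : R) (x : state) (j : nat) : R :=
  let ia := x 0%nat in let ib := x 1%nat in
  let pa := x 2%nat in let pb := x 3%nat in
  let w := x 4%nat in let Tr := x 5%nat in
  let a := a_c P in let b := b_c P in let c := c_c P in let tr := tau_r P in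
  match j with
  | 0%nat => V1 t + a * ia + (pa / tr + w * pb)
  | 1%nat => V2 t + a * ib + (pb / tr - w * pa)
  | 2%nat => - (pa / tr + w * pb) - (a - b) * ia
  | 3%nat => - (pb / tr - w * pa) - (a - b) * ib
  | 4%nat => c / J P * (ia * (- pb) + ib * pa) - p P / J P * Tr
  | _ => 0
  end.

(** Lie derivative of a (time-dependent) function g along the model:
    the time derivative of g along trajectories. *)
Definition lie (P : IMParams) (V1 V2 : R -> R) (g : R -> state -> R) : R -> state -> R :=
  fun t x => deriv_at (fun s => g s x) t
             + sum_f_R0 (fun j => pderiv (g t) x j * field P V1 V2 t x j) 5.

Fixpoint lie_iter (P : IMParams) (V1 V2 : R -> R) (k : nat) (g : R -> state -> R)
  : R -> state -> R :=
  match k with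
  | O => g
  | S k' => lie P V1 V2 (lie_iter P V1 V2 k' g)
  end.

Definition out_a : R -> state -> R := fun _ x => x 0%nat.
Definition out_b : R -> state -> R := fun _ x => x 1%nat.

Definition obs_row_fun (P : IMParams) (V1 V2 : R -> R) (i : nat) : R -> state -> R :=
  match i with
  | 0%nat => out_a
  | 1%nat => out_b
  | 2%nat => lie_iter P V1 V2 1 out_a
  | 3%nat => lie_iter P V1 V2 1 out_b
  | 4%nat => lie_iter P V1 V2 2 out_a
  | _ => lie_iter P V1 V2 2 out_b
  end.

Definition obs_matrix (P : IMParams) (V1 V2 : R -> R) (t : R) (x : state)
  : nat -> nat -> R :=
  fun i j => pderiv (obs_row_fun P V1 V2 i t) x j.

Definition minor (M : nat -> nat -> R) (j : nat) : nat -> nat -> R :=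
  fun r c => M (S r) (if Nat.ltb c j then c else S c).

Fixpoint det (n : nat) (M : nat -> nat -> R) : R :=
  match n with
  | O => 1
  | S m => sum_f_R0 (fun j => (-1)^j * M 0%nat j * det m (minor M j)) m
  end.

(* The output components are coordinates, so their first Lie derivatives are the
   corresponding components of the vector field and their second Lie derivatives are
   explicit polynomials in the state (plus the input derivative).  The observability
   matrix is therefore an explicit matrix whose first two rows are unit vectors; its
   determinant is the 4x4 minor on the flux, speed and torque columns, and a direct
   expansion of that minor gives the stated expression. *)
From Stdlib Require Import Reals Lra Lia ClassicalEpsilon FunctionalExtensionality.
From Coquelicot Require Import Coquelicot.
Open Scope R_scope.

Lemma deriv_at_of_lim (g : R -> R) (t l : R) :
  derivable_pt_lim g t l -> deriv_at g t = l.
Proof.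
  intros Hl. unfold deriv_at.
  assert (Hex : exists l', derivable_pt_lim g t l') by (exists l; exact Hl).
  exact (uniqueness_limite _ _ _ _ (epsilon_spec (inhabits 0) _ Hex) Hl).
Qed.

Lemma pderiv_of_lim (h : state -> R) (x : state) (j : nat) (D : R) :
  derivable_pt_lim (fun u => h (upd x j u)) (x j) D -> pderiv h x j = D.
Proof. apply deriv_at_of_lim. Qed.

Lemma pderiv_coord (k : nat) (x : state) (j : nat) :
  pderiv (fun y => y k) x j = if Nat.eqb k j then 1 else 0.
Proof.
  apply pderiv_of_lim; unfold upd.
  destruct (Nat.eqb k j).
  - apply derivable_pt_lim_id.
  - apply derivable_pt_lim_const.
Qed.

Lemma sum_f_R0_delta (g : nat -> R) (k n : nat) :
  (k <= n)%nat -> sum_f_R0 (fun j => (if Nat.eqb k j then 1 else 0) * g j) n = g k.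
Proof.
  induction n as [|n IH]; intros Hkn; simpl.
  - replace k with 0%nat by lia; simpl; ring.
  - destruct (Nat.eq_dec k (S n)) as [-> | Hne].
    + rewrite Nat.eqb_refl, sum_eq_R0; [ring|].
      intros j Hj; replace (Nat.eqb (S n) j) with false by (symmetry; apply Nat.eqb_neq; lia).
      ring.
    + rewrite IH by lia.
      replace (Nat.eqb k (S n)) with false by (symmetry; apply Nat.eqb_neq; exact Hne).
      ring.
Qed.

Lemma lie_coord (P : IMParams) (V1 V2 : R -> R) (k : nat) :
  (k <= 5)%nat -> lie P V1 V2 (fun _ y => y k) = fun t y => field P V1 V2 t y k.
Proof.
  intros Hk. apply functional_extensionality; intro t.
  apply functional_extensionality; intro y. unfold lie.
  rewrite (deriv_at_of_lim _ _ 0) by apply derivable_pt_lim_const.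
  rewrite Rplus_0_l, <- (sum_f_R0_delta (field P V1 V2 t y) k 5 Hk).
  apply sum_eq; intros j _. now rewrite pderiv_coord.
Qed.

Ltac solve_pderiv :=
  apply is_derive_Reals; unfold upd, field; simpl; auto_derive;
  [ repeat split; auto | field; repeat split; auto ].

Section Gradients.
Variables (P : IMParams) (V1 V2 : R -> R).
Hypotheses (htau : tau_r P <> 0) (hJ : J P <> 0).

Local Notation a := (a_c P).
Local Notation b := (b_c P).
Local Notation tr := (tau_r P).
Local Notation cJ := (c_c P / J P).
Local Notation pJ := (p P / J P).

Definition grad_field_ia (x : state) (j : nat) : R :=
  match j with
  | 0%nat => a | 2%nat => 1 / tr | 3%nat => x 4%nat | 4%nat => x 3%nat | _ => 0
  end.

Definition grad_field_ib (x : state) (j : nat) : R :=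
  match j with
  | 1%nat => a | 2%nat => - x 4%nat | 3%nat => 1 / tr | 4%nat => - x 2%nat | _ => 0
  end.

Lemma pderiv_field_ia (t : R) (x : state) (j : nat) :
  pderiv (fun y => field P V1 V2 t y 0) x j = grad_field_ia x j.
Proof. apply pderiv_of_lim; destruct j as [|[|[|[|[|[|j]]]]]]; solve_pderiv. Qed.

Lemma pderiv_field_ib (t : R) (x : state) (j : nat) :
  pderiv (fun y => field P V1 V2 t y 1) x j = grad_field_ib x j.
Proof. apply pderiv_of_lim; destruct j as [|[|[|[|[|[|j]]]]]]; solve_pderiv. Qed.

Definition lie2_ia (t : R) (y : state) : R :=
  Derive V1 t + a * field P V1 V2 t y 0 + field P V1 V2 t y 2 / tr
  + y 3%nat * field P V1 V2 t y 4 + y 4%nat * field P V1 V2 t y 3.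

Definition lie2_ib (t : R) (y : state) : R :=
  Derive V2 t + a * field P V1 V2 t y 1 + field P V1 V2 t y 3 / tr
  - y 2%nat * field P V1 V2 t y 4 - y 4%nat * field P V1 V2 t y 2.

Lemma lie_field_ia :
  derivable V1 -> lie P V1 V2 (fun t y => field P V1 V2 t y 0) = lie2_ia.
Proof.
  intros hV1. apply functional_extensionality; intro t.
  apply functional_extensionality; intro y. unfold lie.
  rewrite (deriv_at_of_lim _ _ (Derive V1 t)).
  - cbn [sum_f_R0]. rewrite !pderiv_field_ia.
    unfold lie2_ia, grad_field_ia, field; simpl. field; auto.
  - apply is_derive_Reals; unfold field; simpl. auto_derive.
    + apply ex_derive_Reals_1, hV1.
    + apply Rmult_1_l.
Qed.

Lemma lie_field_ib :
  derivable V2 -> lie P V1 V2 (fun t y => field P V1 V2 t y 1) = lie2_ib.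
Proof.
  intros hV2. apply functional_extensionality; intro t.
  apply functional_extensionality; intro y. unfold lie.
  rewrite (deriv_at_of_lim _ _ (Derive V2 t)).
  - cbn [sum_f_R0]. rewrite !pderiv_field_ib.
    unfold lie2_ib, grad_field_ib, field; simpl. field; auto.
  - apply is_derive_Reals; unfold field; simpl. auto_derive.
    + apply ex_derive_Reals_1, hV2.
    + apply Rmult_1_l.
Qed.

Definition grad_lie2_ia (t : R) (x : state) (j : nat) : R :=
  let f := field P V1 V2 t x in
  match j with
  | 0%nat => a * a - (a - b) / tr - x 3%nat * cJ * x 3%nat
  | 1%nat => x 3%nat * cJ * x 2%nat - x 4%nat * (a - b)
  | 2%nat => a / tr - 1 / tr / tr + x 3%nat * cJ * x 1%nat + x 4%nat * x 4%nat
  | 3%nat => a * x 4%nat - 2 * x 4%nat / tr + f 4%nat - x 3%nat * cJ * x 0%nat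
  | 4%nat => a * x 3%nat - x 3%nat / tr + f 3%nat + x 4%nat * x 2%nat
  | 5%nat => - x 3%nat * pJ
  | _ => 0
  end.

Definition grad_lie2_ib (t : R) (x : state) (j : nat) : R :=
  let f := field P V1 V2 t x in
  match j with
  | 0%nat => x 2%nat * cJ * x 3%nat + x 4%nat * (a - b)
  | 1%nat => a * a - (a - b) / tr - x 2%nat * cJ * x 2%nat
  | 2%nat => - a * x 4%nat + 2 * x 4%nat / tr - f 4%nat - x 2%nat * cJ * x 1%nat
  | 3%nat => a / tr - 1 / tr / tr + x 2%nat * cJ * x 0%nat + x 4%nat * x 4%nat
  | 4%nat => - a * x 2%nat + x 2%nat / tr - f 2%nat + x 4%nat * x 3%nat
  | 5%nat => x 2%nat * pJ
  | _ => 0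
  end.

Lemma pderiv_lie2_ia (t : R) (x : state) (j : nat) :
  pderiv (lie2_ia t) x j = grad_lie2_ia t x j.
Proof.
  apply pderiv_of_lim; unfold lie2_ia, grad_lie2_ia.
  destruct j as [|[|[|[|[|[|j]]]]]]; solve_pderiv.
Qed.

Lemma pderiv_lie2_ib (t : R) (x : state) (j : nat) :
  pderiv (lie2_ib t) x j = grad_lie2_ib t x j.
Proof.
  apply pderiv_of_lim; unfold lie2_ib, grad_lie2_ib.
  destruct j as [|[|[|[|[|[|j]]]]]]; solve_pderiv.
Qed.

Lemma obs_matrix_explicit (t : R) (x : state) :
  derivable V1 -> derivable V2 ->
  obs_matrix P V1 V2 t x = fun i j =>
    match i with
    | 0%nat => if Nat.eqb 0 j then 1 else 0
    | 1%nat => if Nat.eqb 1 j then 1 else 0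
    | 2%nat => grad_field_ia x j
    | 3%nat => grad_field_ib x j
    | 4%nat => grad_lie2_ia t x j
    | _ => grad_lie2_ib t x j
    end.
Proof.
  intros hV1 hV2.
  apply functional_extensionality; intro i; apply functional_extensionality; intro j.
  unfold obs_matrix.
  destruct i as [|[|[|[|[|i]]]]]; cbn [obs_row_fun lie_iter]; unfold out_a, out_b;
    rewrite ?lie_coord by lia.
  - apply pderiv_coord.
  - apply pderiv_coord.
  - apply pderiv_field_ia.
  - apply pderiv_field_ib.
  - rewrite lie_field_ia by exact hV1. apply pderiv_lie2_ia.
  - rewrite lie_field_ib by exact hV2. apply pderiv_lie2_ib.
Qed.

End Gradients.

Theorem mainTheorem7 (P : IMParams) (V1 V2 : R -> R)
  (hV1 : derivable V1) (hV2 : derivable V2)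
  (hp : 0 < p P) (hJ : 0 < J P) (htau : 0 < tau_r P) (hk : 0 < k_r P)
  (t : R) (x : state) :
  let psi_a := x 2%nat / k_r P in
  let psi_b := x 3%nat / k_r P in
  let dpsi_a := field P V1 V2 t x 2 / k_r P in
  let dpsi_b := field P V1 V2 t x 3 / k_r P in
  let domega := field P V1 V2 t x 4 in
  let omega := x 4%nat in
  det 6 (obs_matrix P V1 V2 t x)
  = p P / J P * ((k_r P)^2 / (tau_r P)^2)
    * (tau_r P * domega * (psi_a^2 + psi_b^2)
       - (1 + (tau_r P)^2 * omega^2) * (dpsi_a * psi_b - dpsi_b * psi_a)).
Proof.
  intros.
  assert (htau' : tau_r P <> 0) by lra.
  assert (hJ' : J P <> 0) by lra.
  assert (hk' : k_r P <> 0) by lra.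
  rewrite obs_matrix_explicit by assumption.
  unfold psi_a, psi_b, dpsi_a, dpsi_b, domega, omega, det, minor; simpl.
  unfold grad_field_ia, grad_field_ib, grad_lie2_ia, grad_lie2_ib, field; simpl.
  field; auto.
Qed.
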